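(* Let $X,Y,Z$ be compact Hausdorff spaces, and let $E\subseteq C(X)$ and $F\subseteq C(Y)$ be Riesz subspaces, dense for the supremum norm, which contain the constant functions. Let $\phi:E\times F\to C(Z)$ be a Riesz bimorphism which is bi-injective and satisfies $\phi(\mathbf{1}_X,\mathbf{1}_Y)=\mathbf{1}_Z$. Let $T:C(X\times Y)\to C(Z)$ be a lattice homomorphism with $T(\chi(f,g))=\phi(f,g)$ for all $f\in E$, $g\in F$ (such a $T$ exists and is uniquely determined by $\phi$). Then $T$ is injective.
   Context: For Riesz spaces $E,F,G$, a linear map $T:E\to G$ is a Riesz (lattice) homomorphism if $T(x\vee y)=Tx\vee Ty$ for all $x,y$. A bilinear map $\phi:E\times F\to G$ is a Riesz bimorphism if $\phi(\cdot,y):E\to G$ is a Riesz homomorphism for every $y\in F_+$ and $\phi(x,\cdot):F\to G$ is a Riesz homomorphism for every $x\in E_+$. $\phi$ is bi-injective if $\phi(x,y)=0$ implies $x=0$ or $y=0$. The natural bilinear embedding $\chi:C(X)\times C(Y)\to C(X\times Y)$ is $\chi(f,g)(x,y)=f(x)g(y)$. $\mathbf{1}_X$ denotes the constant function one on $X$. *)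

(* C(X) = real-valued continuous functions X -> R,
   R an arbitrary realType (a model of the reals). *)
From HB Require Import structures.
From mathcomp Require Import all_boot all_order all_algebra.
From mathcomp Require Import all_classical all_reals all_analysis.
Set Implicit Arguments. Unset Strict Implicit. Unset Printing Implicit Defensive.
Import Order.TTheory GRing.Theory Num.Theory numFieldNormedType.Exports.
Local Open Scope classical_set_scope.
Local Open Scope ring_scope.

Definition cts (X : topologicalType) (R : realType) (f : X -> R) : Prop :=
  continuous f.

Definition riesz_subspace (X : topologicalType) (R : realType)
    (E : set (X -> R)) : Prop :=
  [/\ E `<=` @cts X R,
      E (fun _ => 0),
      (forall f g, E f -> E g -> E (fun x => f x + g x)),
      (forall (a : R) f, E f -> E (fun x => a * f x)) &
      (forall f g, E f -> E g -> E (fun x => Num.max (f x) (g x)))].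

Definition contains_constants (X : topologicalType) (R : realType)
    (E : set (X -> R)) : Prop :=
  forall c : R, E (fun _ => c).

Definition sup_dense (X : topologicalType) (R : realType)
    (E : set (X -> R)) : Prop :=
  forall f : X -> R, cts f -> forall eps : R, 0 < eps ->
    exists2 g, E g & forall x, `|f x - g x| <= eps.

Definition pos_part_set (X : Type) (R : realType) (E : set (X -> R)) :
  set (X -> R) := [set f | E f /\ forall x, 0 <= f x].

Definition bilinear_on (X Y Z : topologicalType) (R : realType)
    (E : set (X -> R)) (F : set (Y -> R))
    (phi : (X -> R) -> (Y -> R) -> (Z -> R)) : Prop :=
  [/\ (forall f g, E f -> F g -> cts (phi f g)),
      (forall (a : R) f1 f2 g, E f1 -> E f2 -> F g ->
         phi (fun x => a * f1 x + f2 x) g = (fun z => a * phi f1 g z + phi f2 g z)) &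
      (forall (a : R) f g1 g2, E f -> F g1 -> F g2 ->
         phi f (fun y => a * g1 y + g2 y) = (fun z => a * phi f g1 z + phi f g2 z))].

Definition riesz_bimorphism_on (X Y Z : topologicalType) (R : realType)
    (E : set (X -> R)) (F : set (Y -> R))
    (phi : (X -> R) -> (Y -> R) -> (Z -> R)) : Prop :=
  [/\ bilinear_on E F phi,
      (forall g, pos_part_set F g -> forall f1 f2, E f1 -> E f2 ->
         phi (fun x => Num.max (f1 x) (f2 x)) g
         = (fun z => Num.max (phi f1 g z) (phi f2 g z))) &
      (forall f, pos_part_set E f -> forall g1 g2, F g1 -> F g2 ->
         phi f (fun y => Num.max (g1 y) (g2 y))
         = (fun z => Num.max (phi f g1 z) (phi f g2 z)))].

Definition bi_injective_on (X Y Z : Type) (R : realType)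
    (E : set (X -> R)) (F : set (Y -> R))
    (phi : (X -> R) -> (Y -> R) -> (Z -> R)) : Prop :=
  forall f g, E f -> F g -> phi f g = (fun _ => 0) ->
    f = (fun _ => 0) \/ g = (fun _ => 0).

Definition lattice_hom_on (W Z : topologicalType) (R : realType)
    (T : (W -> R) -> (Z -> R)) : Prop :=
  [/\ (forall h, cts h -> cts (T h)),
      (forall (a : R) h1 h2, cts h1 -> cts h2 ->
         T (fun w => a * h1 w + h2 w) = (fun z => a * T h1 z + T h2 z)) &
      (forall h1 h2, cts h1 -> cts h2 ->
         T (fun w => Num.max (h1 w) (h2 w)) = (fun z => Num.max (T h1 z) (T h2 z)))].

Definition chi (X Y : Type) (R : realType) (f : X -> R) (g : Y -> R) :
  X * Y -> R := fun p => f p.1 * g p.2.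

From HB Require Import structures.
From mathcomp Require Import all_boot all_order all_algebra.
From mathcomp Require Import all_classical all_reals all_analysis.
From mathcomp Require Import ring lra.
Import Order.TTheory GRing.Theory Num.Theory numFieldNormedType.Exports.
Local Open Scope classical_set_scope.
Local Open Scope ring_scope.

(* Suppose [T h = 0] with [h <> 0].  Then [T |h| = |T h| = 0], and [|h| > c > 0]
   on some basic neighbourhood [A `*` B] of a point.  Density and Urysohn's lemma
   give bumps [0 <= f <= 1] in [E] supported in [A] and [0 <= g <= 1] in [F]
   supported in [B], nonzero at that point, so that [0 <= chi f g <= |h| / c].
   Positivity of [T] then yields [phi f g = T (chi f g) = 0], contradicting
   bi-injectivity. *)

Section continuity.
Context {R : realType} {X : topologicalType}.
Implicit Types f g : X -> R.

Lemma cts_cst (c : R) : @cts X R (fun _ => c).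
Proof. by move=> x; exact: cvg_cst. Qed.

Lemma cts_sub {f g} : cts f -> cts g -> cts (fun x => f x - g x).
Proof. by move=> cf cg x; apply: cvgB; [exact: cf | exact: cg]. Qed.

Lemma cts_mul {f g} : cts f -> cts g -> cts (fun x => f x * g x).
Proof. by move=> cf cg x; apply: continuousM; [exact: cf | exact: cg]. Qed.

Lemma cts_scale (a : R) {f} : cts f -> cts (fun x => a * f x).
Proof. by move=> cf; apply: cts_mul => //; exact: cts_cst. Qed.

Lemma cts_norm {f} : cts f -> cts (fun x => `|f x|).
Proof. by move=> cf x; apply: continuous_comp; [exact: cf | exact: norm_continuous]. Qed.

End continuity.

Lemma cts_chi {R : realType} {X Y : topologicalType} {f : X -> R} {g : Y -> R} :
  cts f -> cts g -> cts (chi f g).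
Proof.
move=> cf cg q; apply: continuousM.
- by apply: (@continuous_comp _ _ _ fst f); [exact: cvg_fst | exact: cf].
- by apply: (@continuous_comp _ _ _ snd g); [exact: cvg_snd | exact: cg].
Qed.

Section lattice_hom.
Context {R : realType} {W Z : topologicalType} {T : (W -> R) -> (Z -> R)}.
Hypothesis hT : lattice_hom_on T.
Implicit Types h : W -> R.

Let cts0 : cts (fun _ : W => 0 : R) := cts_cst 0.

Lemma lattice_hom0 : T (fun _ => 0) = fun _ => 0.
Proof.
case: hT => _ lin _; have := lin 1 _ _ cts0 cts0; rewrite mul1r addr0 => T00.
by apply/funext => z; have := congr1 (fun G => G z) T00 => /=; lra.
Qed.

Lemma lattice_homZ (a : R) {h} : cts h -> T (fun w => a * h w) = fun z => a * T h z.
Proof.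
case: hT => _ lin _ ch; have := lin a _ _ ch cts0; rewrite lattice_hom0.
by under eq_fun do rewrite addr0; under [RHS]eq_fun do rewrite addr0.
Qed.

Lemma lattice_homB {h1 h2} : cts h1 -> cts h2 ->
  T (fun w => h1 w - h2 w) = fun z => T h1 z - T h2 z.
Proof.
case: hT => _ lin _ c1 c2; have := lin 1 _ _ (cts_sub c1 c2) c2.
have -> : (fun w => 1 * (h1 w - h2 w) + h2 w) = h1 by apply/funext => w; ring.
by move=> Th1; apply/funext => z; rewrite Th1 /=; ring.
Qed.

Lemma lattice_hom_ge0 {h} : cts h -> (forall w, 0 <= h w) -> forall z, 0 <= T h z.
Proof.
case: hT => _ _ lmax ch h_ge0 z; have := lmax h _ ch cts0.
have -> : (fun w => Num.max (h w) 0) = h by apply/funext => w; rewrite max_l.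
by rewrite lattice_hom0 => ->; rewrite le_max lexx orbT.
Qed.

Lemma lattice_hom_le {h1 h2} : cts h1 -> cts h2 -> (forall w, h1 w <= h2 w) ->
  forall z, T h1 z <= T h2 z.
Proof.
move=> c1 c2 le12 z; rewrite -subr_ge0.
have d_ge0 w : 0 <= h2 w - h1 w by rewrite subr_ge0.
by have := lattice_hom_ge0 (cts_sub c2 c1) d_ge0 z; rewrite lattice_homB.
Qed.

Lemma lattice_hom_norm {h} : cts h -> T (fun w => `|h w|) = fun z => `|T h z|.
Proof.
case: hT => _ _ lmax ch.
have -> : (fun w => `|h w|) = fun w => Num.max (h w) (-1 * h w).
  by apply/funext => w; rewrite mulN1r maxrN.
rewrite lmax ?lattice_homZ //; last exact: cts_scale.
by apply/funext => z; rewrite mulN1r maxrN.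
Qed.

End lattice_hom.

Lemma compact_hausdorff_bump (R : realType) {X : topologicalType}
    (cX : compact [set: X]) (hX : hausdorff_space X) (x0 : X) (A : set X) :
  nbhs x0 A -> exists2 u : X -> R, cts u &
    [/\ forall x, 0 <= u x <= 1, u x0 = 1 & forall x, ~ A x -> u x = 0].
Proof.
move=> nA.
have crX : completely_regular_space X :=
  @normal_completely_regular R X (compact_normal hX cX) (hausdorff_accessible hX).
have sep : uniform_separator [set x0] (~` A°).
  apply: crX; first by rewrite closedC; exact: open_interior.
  by move=> nA'; apply: nA'; exact: nA.
set v := @Urysohn X R [set x0] (~` A°).
have v_range x : 0 <= v x <= 1.
  by have := Urysohn_range (imageT v x); rewrite /= in_itv.
exists (fun x => 1 - v x).
  by apply: cts_sub; [exact: cts_cst | exact: Urysohn_continuous].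
split.
- by move=> x; have := v_range x; lra.
- by rewrite (@Urysohn_sub0 _ _ _ _ sep (v x0)) ?subr0 //; exists x0.
- move=> x nAx; rewrite (@Urysohn_sub1 _ _ _ _ sep (v x)) ?subrr //.
  by exists x => // /interior_subset.
Qed.

(* Approximate a continuous bump within [1/4] and truncate below at [1/2]. *)
Lemma riesz_dense_bump {R : realType} {X : topologicalType}
    (cX : compact [set: X]) (hX : hausdorff_space X)
    {E : set (X -> R)} (rE : riesz_subspace E) (dE : sup_dense E)
    (kE : contains_constants E) {x0 : X} {A : set X} :
  nbhs x0 A -> exists2 f, E f &
    [/\ forall x, 0 <= f x <= 1, 0 < f x0 & forall x, ~ A x -> f x = 0].
Proof.
move=> /(compact_hausdorff_bump R cX hX) [u cu [u_range u1 u0]].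
have [e Ee ue] := dE _ cu (1/4) ltac:(lra).
case: rE => _ _ Eadd _ Emax.
exists (fun x => Num.max (e x + - (1/2)) 0).
  exact: (Emax _ _ (Eadd _ _ Ee (kE _)) (kE 0)).
split.
- move=> x; move: (ue x) (u_range x); rewrite ler_norml => /andP[? ?] /andP[? ?].
  by rewrite le_max lexx orbT /= ge_max; apply/andP; split; lra.
- by move: (ue x0); rewrite u1 ler_norml lt_max => /andP[? ?]; apply/orP; left; lra.
- by move=> x nAx; move: (ue x); rewrite u0 // ler_norml => /andP[? ?]; rewrite max_r //; lra.
Qed.

Lemma chi_le_scale {R : realType} {X Y : Type} {f : X -> R} {g : Y -> R}
    {A : set X} {B : set Y} {k : X * Y -> R} {c : R} :
  0 < c -> (forall x, 0 <= f x <= 1) -> (forall y, 0 <= g y <= 1) ->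
  (forall x, ~ A x -> f x = 0) -> (forall y, ~ B y -> g y = 0) ->
  (forall w, 0 <= k w) -> A `*` B `<=` [set w | c < k w] ->
  forall w, chi f g w <= c^-1 * k w.
Proof.
move=> c_gt0 f01 g01 fA gB k_ge0 ABk [x y]; rewrite /chi /=.
have kc_ge0 : 0 <= c^-1 * k (x, y) by rewrite mulr_ge0 // invr_ge0 ltW.
have [Ax|nAx] := pselect (A x); last by rewrite fA // mul0r.
have [By|nBy] := pselect (B y); last by rewrite gB // mulr0.
have /andP[f0 f1] := f01 x; have /andP[g0 g1] := g01 y.
apply: le_trans (mulr_ile1 f0 g0 f1 g1) _.
by rewrite ler_pdivlMl // mulr1 ltW //; apply: ABk.
Qed.

Lemma lattice_hom_kernel0 {R : realType} {X Y Z : topologicalType}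
    (cX : compact [set: X]) (hX : hausdorff_space X)
    (cY : compact [set: Y]) (hY : hausdorff_space Y)
    {E : set (X -> R)} {F : set (Y -> R)}
    (rE : riesz_subspace E) (rF : riesz_subspace F)
    (dE : sup_dense E) (dF : sup_dense F)
    (kE : contains_constants E) (kF : contains_constants F)
    {phi : (X -> R) -> (Y -> R) -> (Z -> R)} (iphi : bi_injective_on E F phi)
    {T : (X * Y -> R) -> (Z -> R)} (hT : lattice_hom_on T)
    (eT : forall f g, E f -> F g -> T (chi f g) = phi f g)
    {h : X * Y -> R} :
  cts h -> T h = (fun _ => 0) -> h = (fun _ => 0).
Proof.
move=> ch Th0; apply/funext => p; apply/eqP/negPn/negP => hp_neq0.
set k := fun w => `|h w|.
have ck : cts k by exact: cts_norm.
have Tk0 : T k = fun _ => 0.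
  by rewrite (lattice_hom_norm hT ch) Th0; apply/funext => z; rewrite normr0.
have hp_gt0 : 0 < `|h p| by rewrite normr_gt0.
set c := `|h p| / 2.
have c_gt0 : 0 < c by rewrite /c; lra.
have [[A B] /= [nA nB] ABk] : nbhs p (k @^-1` [set r | c < r]).
  apply: ck; apply: open_nbhs_nbhs; split; first exact: open_gt.
  by rewrite /= /k /c; lra.
have [f Ef [f01 fp fA]] := riesz_dense_bump cX hX rE dE kE nA.
have [g Fg [g01 gp gB]] := riesz_dense_bump cY hY rF dF kF nB.
have cfg : cts (chi f g).
  by apply: cts_chi; [case: rE => + _ _ _ _; apply | case: rF => + _ _ _ _; apply].
have chi_le := chi_le_scale c_gt0 f01 g01 fA gB (fun w => normr_ge0 (h w)) ABk.
have phi0 : phi f g = fun _ => 0.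
  rewrite -eT //; apply/funext => z; apply/eqP; rewrite eq_le; apply/andP; split.
    by have := lattice_hom_le hT cfg (cts_scale c^-1 ck) chi_le z;
      rewrite lattice_homZ // Tk0 mulr0.
  apply: (lattice_hom_ge0 hT cfg) => w; rewrite /chi mulr_ge0 //.
    by have /andP[] := f01 w.1.
  by have /andP[] := g01 w.2.
have [f0|g0] := iphi f g Ef Fg phi0.
- by move: fp; rewrite f0 ltxx.
- by move: gp; rewrite g0 ltxx.
Qed.

Theorem proposition3p3 (R : realType) (X Y Z : topologicalType)
  (cX : compact [set: X]) (hX : hausdorff_space X)
  (cY : compact [set: Y]) (hY : hausdorff_space Y)
  (cZ : compact [set: Z]) (hZ : hausdorff_space Z)
  (E : set (X -> R)) (F : set (Y -> R))
  (rE : riesz_subspace E) (rF : riesz_subspace F)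
  (dE : sup_dense E) (dF : sup_dense F)
  (kE : contains_constants E) (kF : contains_constants F)
  (phi : (X -> R) -> (Y -> R) -> (Z -> R))
  (bphi : riesz_bimorphism_on E F phi)
  (iphi : bi_injective_on E F phi)
  (uphi : phi (fun _ => 1) (fun _ => 1) = (fun _ => 1))
  (T : (X * Y -> R) -> (Z -> R))
  (hT : lattice_hom_on T)
  (eT : forall f g, E f -> F g -> T (chi f g) = phi f g) :
  forall h1 h2 : X * Y -> R, cts h1 -> cts h2 -> T h1 = T h2 -> h1 = h2.
Proof.
move=> h1 h2 c1 c2 T12.
have T12_0 : T (fun w => h1 w - h2 w) = fun _ => 0.
  by rewrite (lattice_homB hT c1 c2) T12; apply/funext => z; rewrite subrr.
have h12_0 := lattice_hom_kernel0 cX hX cY hY rE rF dE dF kE kF iphi hT eT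
  (cts_sub c1 c2) T12_0.
by apply/funext => w; apply/subr0_eq; exact: (congr1 (fun G => G w) h12_0).
Qed.
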